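(* With the notation of the context, for all fixed frequencies, $$|S^{\rm bad}_{kk_2}|\lesssim(N_1\wedge N_3)^{1-\frac\alpha2},\qquad |S^{\rm bad}_{k_1k_3}|\lesssim(N\wedge N_2)^{1-\frac\alpha2};$$ consequently $|S_{kk_2}|\lesssim(N_1\wedge N_3)^{1-\frac\alpha2}$ and $|S_{k_1k_3}|\lesssim(N\wedge N_2)^{1-\frac\alpha2}$.
   Context: Fix $\alpha\in(1,2)$, dyadic numbers $1\le N_1,N_2,N_3\le N$, a real number $m$ and a constant $C_0>0$. Let $S$ be the set of $(k,k_1,k_2,k_3)\in\mathbb Z^4$ with $k=k_1-k_2+k_3$, $k_2\notin\{k_1,k_3\}$, $\big||k_1|^\alpha-|k_2|^\alpha+|k_3|^\alpha-|k|^\alpha-m\big|\le C_0$, $|k|\le N$ and $|k_j|\le N_j$ for $j=1,2,3$. Let $S_{k_1k_3}=\{(k,k_2):(k,k_1,k_2,k_3)\in S\}$ and $S_{kk_2}=\{(k_1,k_3):(k,k_1,k_2,k_3)\in S\}$. Fix a small absolute constant $c\in(0,1)$ and set $S^{\rm bad}_{k_1k_3}=\{(k,k_2)\in S_{k_1k_3}:|2k-(k_1+k_3)|<c|k_1+k_3|\}$, $S^{\rm good}_{k_1k_3}=S_{k_1k_3}\setminus S^{\rm bad}_{k_1k_3}$, $S^{\rm bad}_{kk_2}=\{(k_1,k_3)\in S_{kk_2}:|2k_1-(k+k_2)|<c|k+k_2|\}$, $S^{\rm good}_{kk_2}=S_{kk_2}\setminus S^{\rm bad}_{kk_2}$. $|A|$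 is cardinality, $a\wedge b=\min(a,b)$. $A\lesssim B$ means $A\le CB$ with $C$ depending only on $\alpha$, $c$ and $C_0$. *)

From HB Require Import structures.
From mathcomp Require Import all_boot all_order all_algebra.
From mathcomp Require Import reals exp.
Set Implicit Arguments. Unset Strict Implicit. Unset Printing Implicit Defensive.
Import Order.TTheory GRing.Theory Num.Theory.
Local Open Scope ring_scope.

Definition dyadic (N : nat) : Prop := exists n : nat, N = (2 ^ n)%N.

Definition zrange (n : nat) : seq int :=
  [seq (i%:Z - n%:Z) | i <- iota 0 (2 * n).+1].

Section Sets.
Variables (R : realType) (alpha m C0 c : R) (N N1 N2 N3 : nat).

(* |x|^alpha for an integer x (with 0^alpha = 0 since alpha <> 0) *)
Definition apow (x : int) : R := powR (`|x|%:~R) alpha.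

Definition inS (k k1 k2 k3 : int) : bool :=
  [&& k == k1 - k2 + k3, k2 != k1, k2 != k3,
      `| apow k1 - apow k2 + apow k3 - apow k - m | <= C0,
      `|k| <= N%:Z, `|k1| <= N1%:Z, `|k2| <= N2%:Z & `|k3| <= N3%:Z].

(* S_{k k2} = {(k1,k3) : (k,k1,k2,k3) \in S}, as a duplicate-free list *)
Definition S_kk2 (k k2 : int) : seq (int * int) :=
  [seq p <- [seq (a, b) | a <- zrange N1, b <- zrange N3] | inS k p.1 k2 p.2].

(* S_{k1 k3} = {(k,k2) : (k,k1,k2,k3) \in S}, as a duplicate-free list *)
Definition S_k1k3 (k1 k3 : int) : seq (int * int) :=
  [seq p <- [seq (a, b) | a <- zrange N, b <- zrange N2] | inS p.1 k1 p.2 k3].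

Definition S_kk2_bad (k k2 : int) : seq (int * int) :=
  [seq p <- S_kk2 k k2 | (`|2 * p.1 - (k + k2)|%:~R : R) < c * (`|k + k2|%:~R)].

Definition S_k1k3_bad (k1 k3 : int) : seq (int * int) :=
  [seq p <- S_k1k3 k1 k3 | (`|2 * p.1 - (k1 + k3)|%:~R : R) < c * (`|k1 + k3|%:~R)].

End Sets.

From HB Require Import structures.
From mathcomp Require Import all_boot all_order all_algebra.
From mathcomp Require Import reals exp.
From mathcomp Require Import ring lra zify.
Import Order.TTheory GRing.Theory Num.Theory.
Local Open Scope ring_scope.
Set Implicit Arguments. Unset Strict Implicit.

(** The points of S_{k k2} are determined by x = k1 (then k3 = s - x with
s = k + k2), and they are exactly the integers x with |x| <= N1, |s - x| <= N3
and |x|^a + |s - x|^a within C0 of a fixed level A; likewise for S_{k1 k3}.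
The function F(x) = |x|^a + |s - x|^a is symmetric about s/2 and strongly
convex on each half-line: writing M for a bound on min(|x|, |s - x|), the
Bregman divergence of t |-> |t|^a is at least a(a - 1)/4 (v - u)^2 M^(a - 2),
which gives F(y) - F(x) >= a(a - 1)/4 (y - x)^2 M^(a - 2) for s/2 <= x <= y.
Two solutions on the same side of s/2 are therefore at distance
O(M^(1 - a/2)), and each side holds O(M^(1 - a/2)) integers. *)

Section PowR.
Variable R : realType.
Implicit Types (a b p d k r u v w x y z B M : R).

Lemma powR_young p x y : 1 < p -> 0 <= x -> 0 <= y ->
  p * x * y `^ (p - 1) <= x `^ p + (p - 1) * y `^ p.
Proof.
move=> p1 x0 y0.
have p0 : 0 < p by lra.
have q0 : 0 < p / (p - 1) by rewrite divr_gt0 ?subr_gt0.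
have := conjugate_powR x0 (powR_ge0 y (p - 1)) p0 q0.
rewrite -powRrM mulrCA divff ?gt_eqF ?subr_gt0 // mulr1 invf_div => young.
have /young {}young : p^-1 + (p - 1) / p = 1 by field; rewrite gt_eqF.
have -> : x `^ p + (p - 1) * y `^ p = p * (x `^ p / p + y `^ p * ((p - 1) / p)).
  by field; rewrite gt_eqF.
by rewrite -mulrA ler_pM2l.
Qed.

Lemma powR_tangent_le p u v : 1 < p -> 0 <= u -> u <= v ->
  p * u `^ (p - 1) * (v - u) <= v `^ p - u `^ p.
Proof.
move=> p1 u0 uv.
have := powR_young p1 (le_trans u0 uv) u0.
rewrite -(mulr_powRB1 u0 (_ : 0 < p)); last by lra.
move: (u `^ (p - 1)) (v `^ p) => U V; nra.
Qed.

Lemma powR_tangent_ge p u v : 1 < p -> 0 <= u -> u <= v ->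
  v `^ p - u `^ p <= p * v `^ (p - 1) * (v - u).
Proof.
move=> p1 u0 uv.
have v0 := le_trans u0 uv.
have := powR_young p1 u0 v0.
rewrite -(mulr_powRB1 v0 (_ : 0 < p)); last by lra.
move: (v `^ (p - 1)) (u `^ p) => V U; nra.
Qed.

Lemma le0_ger_powR r x y : r <= 0 -> 0 < x -> x <= y -> y `^ r <= x `^ r.
Proof.
move=> r0 x0 xy.
have y0 := lt_le_trans x0 xy.
have -> : r = - (- r) by rewrite opprK.
rewrite (powRN x) (powRN y) lef_pV2 ?posrE ?powR_gt0 //.
by apply: (@ge0_ler_powR _ (- r)); rewrite ?nnegrE ?oppr_ge0 // ltW.
Qed.

Lemma mulr_powR_le p z M : 0 < p <= 1 -> 0 <= z <= M ->
  z * M `^ (p - 1) <= z `^ p.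
Proof.
move=> /andP[p0 p1] /andP[z0 zM].
have [->|zn0] := eqVneq z 0; first by rewrite mul0r powR_ge0.
have zpos : 0 < z by rewrite lt_neqAle eq_sym zn0.
rewrite -(mulr_powRB1 z0 p0) ler_pM2l //.
by apply: le0_ger_powR => //; lra.
Qed.

Lemma concave_powR_tangent_le b u v : 0 < b < 1 -> 0 <= u -> 0 < v ->
  b * v `^ (b - 1) * (v - u) <= v `^ b - u `^ b.
Proof.
move=> /andP[b0 b1] u0 v0.
have ib1 : 1 < b^-1 by rewrite invf_gt1.
have := powR_young ib1 (powR_ge0 u b) (powR_ge0 v b).
rewrite -!powRrM mulfV ?gt_eqF // !powRr1 ?(ltW v0) //.
have -> : b * (b^-1 - 1) = 1 - b by field; rewrite gt_eqF.
set Y := v `^ (b - 1).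
have Y0 : 0 < Y by rewrite powR_gt0.
have Y1 : v `^ (1 - b) * Y = 1.
  by rewrite -powRD ?(gt_eqF v0) ?implybT // addrA subrK subrr powRr0.
have vY : v * Y = v `^ b by rewrite mulr_powRB1 // ltW.
clearbody Y; move: (v `^ (1 - b)) Y1 => Z Y1.
move=> /(ler_wpM2r (ltW (mulr_gt0 b0 Y0))).
have -> : b^-1 * u `^ b * Z * (b * Y) = u `^ b.
  by rewrite -[RHS]mulr1 -Y1; field; rewrite gt_eqF.
have -> : (u + (b^-1 - 1) * v) * (b * Y) = b * u * Y + (1 - b) * (v * Y).
  by field; rewrite gt_eqF.
rewrite -vY; nra.
Qed.

(* Split [u, v] at its midpoint: the two chords of t^a differ by an increment
of the concave function t^(a - 1). *)
Lemma powR_bregman_right a u v M : 1 < a < 2 -> 0 <= u -> u <= v <= M ->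
  a * (a - 1) / 4 * (v - u) ^+ 2 * M `^ (a - 2)
    <= u `^ a - v `^ a + a * v `^ (a - 1) * (v - u).
Proof.
move=> /andP[a1 a2] u0 /andP[uv vM].
have [<-|neq] := eqVneq u v; first by rewrite subrr expr0n /= !mulr0 mul0r addrN add0r.
have ltuv : u < v by rewrite lt_neqAle neq.
set m := (u + v) / 2; set h := (v - u) / 2.
have h0 : 0 <= h by rewrite /h; lra.
have D1 : v `^ a - m `^ a <= a * v `^ (a - 1) * h.
  have -> : h = v - m by rewrite /m /h; field.
  by apply: powR_tangent_ge => //; rewrite /m; lra.
have D2 : m `^ a - u `^ a <= a * m `^ (a - 1) * h.
  have -> : h = m - u by rewrite /m /h; field.
  by apply: powR_tangent_ge => //; rewrite /m; lra.
have D3 : (a - 1) * v `^ (a - 2) * h <= v `^ (a - 1) - m `^ (a - 1).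
  have -> : h = v - m by rewrite /m /h; field.
  have -> : a - 2 = a - 1 - 1 by ring.
  by apply: concave_powR_tangent_le; rewrite ?subr_gt0 //; [lra | rewrite /m; lra | lra].
have D4 : M `^ (a - 2) <= v `^ (a - 2) by apply: le0_ger_powR; lra.
have E : a * h * ((a - 1) * h * M `^ (a - 2)) <= a * h * (v `^ (a - 1) - m `^ (a - 1)).
  apply: ler_wpM2l; first by apply: mulr_ge0; lra.
  apply: le_trans D3; rewrite [X in _ <= X]mulrAC.
  by apply: ler_wpM2l => //; apply: mulr_ge0; lra.
have -> : v - u = 2 * h by rewrite /h; field.
move: D1 D2 E; move: (v `^ a) (m `^ a) (u `^ a) (v `^ (a - 1)) (m `^ (a - 1)) (M `^ (a - 2)).
move=> Va Ma Ua V1 M1 P D1 D2 E; nra.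
Qed.

Lemma powR_bregman_left a u v M : 1 < a < 2 -> 0 <= u -> u <= v <= M ->
  a * (a - 1) / 4 * (v - u) ^+ 2 * M `^ (a - 2)
    <= v `^ a - u `^ a - a * u `^ (a - 1) * (v - u).
Proof.
move=> /andP[a1 a2] u0 /andP[uv vM].
have [<-|neq] := eqVneq u v; first by rewrite subrr expr0n /= !mulr0 mul0r subrr subr0.
have ltuv : u < v by rewrite lt_neqAle neq.
set m := (u + v) / 2; set h := (v - u) / 2.
have h0 : 0 <= h by rewrite /h; lra.
have D1 : a * m `^ (a - 1) * h <= v `^ a - m `^ a.
  have -> : h = v - m by rewrite /m /h; field.
  by apply: powR_tangent_le => //; rewrite /m; lra.
have D2 : a * u `^ (a - 1) * h <= m `^ a - u `^ a.
  have -> : h = m - u by rewrite /m /h; field.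
  by apply: powR_tangent_le => //; rewrite /m; lra.
have D3 : (a - 1) * m `^ (a - 2) * h <= m `^ (a - 1) - u `^ (a - 1).
  have -> : h = m - u by rewrite /m /h; field.
  have -> : a - 2 = a - 1 - 1 by ring.
  by apply: concave_powR_tangent_le; rewrite ?subr_gt0 //; [lra | rewrite /m; lra].
have D4 : M `^ (a - 2) <= m `^ (a - 2) by apply: le0_ger_powR; rewrite /m; lra.
have E : a * h * ((a - 1) * h * M `^ (a - 2)) <= a * h * (m `^ (a - 1) - u `^ (a - 1)).
  apply: ler_wpM2l; first by apply: mulr_ge0; lra.
  apply: le_trans D3; rewrite [X in _ <= X]mulrAC.
  by apply: ler_wpM2l => //; apply: mulr_ge0; lra.
have -> : v - u = 2 * h by rewrite /h; field.
move: D1 D2 E; move: (v `^ a) (m `^ a) (u `^ a) (u `^ (a - 1)) (m `^ (a - 1)) (M `^ (a - 2)).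
move=> Va Ma Ua U1 M1 P D1 D2 E; nra.
Qed.

Lemma powR_bregman_cross a u v M : 1 < a < 2 -> 0 <= u <= M -> 0 <= v <= M ->
  a * (a - 1) / 4 * (v + u) ^+ 2 * M `^ (a - 2)
    <= u `^ a - v `^ a + a * v `^ (a - 1) * (v + u).
Proof.
move=> /andP[a1 a2] /andP[u0 uM] /andP[v0 vM].
have k0 : 0 <= a * (a - 1) / 4 by nra.
have k1 : a * (a - 1) / 4 <= (a - 1) / 2 by nra.
have quad : a * (a - 1) / 4 * (v + u) ^+ 2 <= u ^+ 2 + (a - 1) * v ^+ 2 + a * (u * v).
  move: (a * (a - 1) / 4) k0 k1 => k k0 k1.
  have : 0 <= (1 - k) * u ^+ 2 by apply: mulr_ge0; [lra | apply: sqr_ge0].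
  have : 0 <= (a - 1 - k) * v ^+ 2 by apply: mulr_ge0; [lra | apply: sqr_ge0].
  have : 0 <= (a - 2 * k) * (u * v) by apply: mulr_ge0; [lra | apply: mulr_ge0].
  rewrite !expr2; lra.
have pa : 0 < a - 1 <= 1 by apply/andP; split; lra.
have lin z : 0 <= z <= M -> z * M `^ (a - 2) <= z `^ (a - 1).
  by move=> zM; have := mulr_powR_le pa zM; have -> : a - 1 - 1 = a - 2 by ring.
have Uu : u * M `^ (a - 2) <= u `^ (a - 1) by apply: lin; rewrite u0.
have Vv : v * M `^ (a - 2) <= v `^ (a - 1) by apply: lin; rewrite v0.
have := ler_wpM2r (powR_ge0 M (a - 2)) quad.
have := ler_wpM2l u0 Uu; have := ler_wpM2l v0 Vv; have := ler_wpM2l u0 Vv.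
rewrite -(mulr_powRB1 u0 (_ : 0 < a)) -?(mulr_powRB1 v0 (_ : 0 < a)); try lra.
move: (u `^ (a - 1)) (v `^ (a - 1)) (M `^ (a - 2)) (a * (a - 1) / 4) => U1 V1 P k.
rewrite !expr2; nra.
Qed.

Lemma normr_powR_bregman a u v w M : 1 < a < 2 -> u <= v ->
  `|u| <= M -> `|v| <= M -> `|v| <= w ->
  a * (a - 1) / 4 * (v - u) ^+ 2 * M `^ (a - 2)
    <= `|u| `^ a - `|v| `^ a + a * w `^ (a - 1) * (v - u).
Proof.
move=> a12 uv uM vM vw; have /andP[a1 a2] := a12.
have vu0 : 0 <= v - u by rewrite subr_ge0.
have slope : a * `|v| `^ (a - 1) * (v - u) <= a * w `^ (a - 1) * (v - u).
  apply: ler_wpM2r => //; apply: ler_wpM2l; first lra.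
  by apply: (@ge0_ler_powR _ (a - 1)); rewrite ?nnegrE ?(le_trans _ vw) //; lra.
have [u0|u0] := lerP 0 u.
  have v0 := le_trans u0 uv; rewrite !ger0_norm // in uM vM slope *.
  apply: le_trans (powR_bregman_right a12 u0 _) _; first by rewrite uv.
  by rewrite lerD2l.
have [v0|v0] := lerP v 0.
  rewrite !ler0_norm ?(ltW u0) // in uM vM *.
  have left := powR_bregman_left (M := M) a12 (_ : 0 <= - v) (_ : - v <= - u <= M).
  have {left} := left (ltac:(lra)) (ltac:(apply/andP; split; lra)).
  have -> : - u - - v = v - u by ring.
  have : 0 <= a * w `^ (a - 1) * (v - u) by rewrite !mulr_ge0 ?powR_ge0 //; lra.
  have : 0 <= a * (- v) `^ (a - 1) * (v - u) by rewrite !mulr_ge0 ?powR_ge0 //; lra.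
  lra.
rewrite ltr0_norm // gtr0_norm // in uM vM slope *.
have := powR_bregman_cross a12 (_ : 0 <= - u <= M) (_ : 0 <= v <= M).
move=> /(_ (ltac:(apply/andP; split; lra)) (ltac:(apply/andP; split; lra))).
by rewrite -[v - u]/(v + - u) => /le_trans; apply; rewrite lerD2l.
Qed.

Lemma powR_sum_gap a s x y M1 M2 : 1 < a < 2 -> s <= 2 * x -> x <= y ->
  `|x| <= M1 -> `|y| <= M1 -> `|s - x| <= M2 -> `|s - y| <= M2 ->
  a * (a - 1) / 4 * (y - x) ^+ 2 * (Num.min M1 M2) `^ (a - 2)
    <= (`|y| `^ a + `|s - y| `^ a) - (`|x| `^ a + `|s - x| `^ a).
Proof.
move=> a12; have /andP[a1 a2] := a12.
(* (s, x) |-> (-s, x - s) preserves F, the side of s/2 and the order, and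
   swaps |x| with |s - x|. *)
wlog s0 : s x y M1 M2 / 0 <= s => [wlog|].
  have [s0|s0] := lerP 0 s; first exact: wlog.
  move=> sx xy x1 y1 x2 y2.
  have := wlog (- s) (x - s) (y - s) M2 M1.
  have -> : - s - (x - s) = - x by ring.
  have -> : - s - (y - s) = - y by ring.
  have -> : y - s - (x - s) = y - x by ring.
  rewrite (distrC x) (distrC y) !normrN minC.
  by rewrite (addrC (`|s - y| `^ a)) (addrC (`|s - x| `^ a)); apply; lra.
move=> sx xy x1 y1 x2 y2.
have x0 : 0 <= x by lra.
have y0 : 0 <= y by lra.
have dist_min z : s <= 2 * z -> `|z| <= M1 -> `|s - z| <= M2 -> `|s - z| <= Num.min M1 M2.
  move=> sz z1 z2; rewrite le_min z2 andbT (le_trans _ z1) //.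
  by rewrite (@ger0_norm _ z); [apply/ler_normlP; split | ]; lra.
have sy : s <= 2 * y by lra.
have slope : `|s - x| <= x by apply/ler_normlP; split; lra.
have := normr_powR_bregman a12 (_ : s - y <= s - x)
  (dist_min y sy y1 y2) (dist_min x sx x1 x2) slope.
have -> : s - x - (s - y) = y - x by ring.
have := powR_tangent_le a1 x0 xy.
rewrite (ger0_norm x0) (ger0_norm y0) => tangent /(_ (ltac:(lra))); lra.
Qed.

Lemma le_powR_of_sqr_le k B M d r : 0 < k -> 0 <= B -> 0 < M ->
  k * d ^+ 2 * M `^ (- (2 * r)) <= B -> d <= (1 + B / k) * M `^ r.
Proof.
move=> k0 B0 M0 hd.
have P0 : 0 < M `^ r by apply: powR_gt0.
have BK : 0 <= B / k by apply: divr_ge0 => //; apply: ltW.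
have [d0|d0] := ltrP d 0.
  by apply: le_trans (ltW d0) _; apply: mulr_ge0; [lra | apply: ltW].
have sq : M `^ (2 * r) = M `^ r ^+ 2 by rewrite mulrC powRrM powR_mulrn ?powR_ge0.
rewrite powRN sq ler_pdivrMr ?exprn_gt0 // in hd.
set P := M `^ r in hd P0 *.
have hd' : d ^+ 2 <= B / k * P ^+ 2.
  rewrite -(ler_pM2l k0); have -> // : k * (B / k * P ^+ 2) = B * P ^+ 2.
  by field; rewrite gt_eqF.
rewrite -ler_sqr ?nnegrE ?mulr_ge0 ?(ltW P0) //; last lra.
apply: (le_trans hd'); rewrite exprMn ler_wpM2r ?sqr_ge0 //.
by move: (B / k) BK => t t0; nra.
Qed.

End PowR.

Lemma zrange_uniq n : uniq (zrange n).
Proof. by rewrite map_inj_uniq ?iota_uniq // => i j /addIr [->]. Qed.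

Lemma size_zrange n : size (zrange n) = (2 * n).+1.
Proof. by rewrite size_map size_iota. Qed.

Lemma mem_zrange n x : (x \in zrange n) = (`|x| <= n%:Z).
Proof.
apply/mapP/idP => [[i]|xn]; first by rewrite mem_iota => /andP[_ ilt] ->; lia.
by exists (absz (x + n%:Z)); [rewrite mem_iota; lia | rewrite gez0_abs; lia].
Qed.

Lemma count_int_diam (R : archiRealFieldType) (l : seq int) (Q : pred int) (D : R) :
  uniq l -> 0 <= D -> (forall x y, Q x -> Q y -> x <= y -> (y - x)%:~R <= D) ->
  (count Q l)%:R <= 2 * D + 1.
Proof.
move=> ul D0 diam.
set n := absz (Num.floor D).
have nD : n%:R <= D.
  by rewrite -[n%:R]/((n%:Z)%:~R) gez0_abs ?floor_ge0 ?floor_le.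
have [/hasP[x0 _ Qx0]|noQ] := boolP (has Q l); last first.
  by move: noQ; rewrite has_count lt0n negbK => /eqP ->; lra.
apply: (@le_trans _ _ (2 * n).+1%:R); last by rewrite -addn1 natrD natrM; lra.
rewrite ler_nat -size_filter -(size_zrange n) -(size_map (+%R x0) (zrange n)).
apply: uniq_leq_size; first exact: filter_uniq.
move=> x; rewrite mem_filter => /andP[Qx _]; apply/mapP; exists (x - x0); last by ring.
have window z w : Q z -> Q w -> z <= w -> w - z <= n%:Z.
  by move=> Qz Qw zw; rewrite gez0_abs ?floor_ge0 // floor_ge_int diam.
by rewrite mem_zrange; have [/window|/ltW /window] := lerP x0 x; [|]; lia.
Qed.

Section LevelSet.
Variables (R : realType) (a C0 : R).

Definition near_level (s : int) (M1 M2 : nat) (A : R) : pred int := fun x =>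
  [&& `|x| <= M1%:Z, `|s - x| <= M2%:Z & `|apow a x + apow a (s - x) - A| <= C0].

Definition gap_const : R := 1 + 2 * C0 / (a * (a - 1) / 4).

Lemma gap_const_ge1 : 1 < a -> 0 <= C0 -> 1 <= gap_const.
Proof.
move=> a1 C0ge0; rewrite lerDl; apply: divr_ge0; first lra.
by apply: divr_ge0 => //; apply: mulr_ge0; lra.
Qed.

Lemma near_level_reflect s M1 M2 A x :
  near_level s M1 M2 A x = near_level s M2 M1 A (s - x).
Proof. by rewrite /near_level subKr (addrC (apow a (s - x))) andbCA. Qed.

Lemma natr_minn (M1 M2 : nat) : (minn M1 M2)%:R = Num.min (M1%:R : R) M2%:R.
Proof.
by case: leqP => h; [rewrite min_l // ler_nat | rewrite min_r // ler_nat ltnW].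
Qed.

Lemma int_normr_le (z : int) (n : nat) : `|z| <= n%:Z -> `|z%:~R : R| <= n%:R.
Proof. by rewrite -intr_norm -[n%:R]/((n%:Z)%:~R) ler_int. Qed.

Lemma near_level_gap s M1 M2 A x y : 1 < a < 2 -> (0 < minn M1 M2)%N ->
  near_level s M1 M2 A x -> near_level s M1 M2 A y ->
  (s <= 2 * x) = (s <= 2 * y) -> x <= y ->
  (y - x)%:~R <= gap_const * (minn M1 M2)%:R `^ (1 - a / 2).
Proof.
move=> a12 M0.
wlog sx : M1 M2 x y M0 / s <= 2 * x => [wlog|].
  move=> nx ny side xy.
  have [sx|xs] := lerP s (2 * x); first exact: wlog.
  have ys : 2 * y < s by rewrite ltNge -side -ltNge.
  have -> : y - x = (s - x) - (s - y) by ring.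
  rewrite minnC; apply: wlog; rewrite 1?minnC -1?near_level_reflect //; lia.
move=> /and3P[x1 x2 xA] /and3P[y1 y2 yA] _ xy.
rewrite /apow !intr_norm !rmorphB /= in xA yA.
have C0ge0 : 0 <= C0 := le_trans (normr_ge0 _) xA.
have sxR : s%:~R <= 2 * x%:~R :> R by move: sx; rewrite -(ler_int R) intrM.
have xyR : x%:~R <= y%:~R :> R by rewrite ler_int.
have := int_normr_le x2; have := int_normr_le y2; rewrite !rmorphB /= => y2R x2R.
have := powR_sum_gap a12 sxR xyR (int_normr_le x1) (int_normr_le y1) x2R y2R.
rewrite -natr_minn -rmorphB /= => gap.
have k0 : 0 < a * (a - 1) / 4 by apply: divr_gt0 => //; apply: mulr_gt0; lra.
have M0R : 0 < (minn M1 M2)%:R :> R by rewrite ltr0n.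
apply: le_powR_of_sqr_le => //; first lra.
have -> : - (2 * (1 - a / 2)) = a - 2 by field.
apply: le_trans gap _.
move: xA yA => /ler_normlP[? ?] /ler_normlP[? ?]; lra.
Qed.

Lemma count_near_level s M1 M2 A : 1 < a < 2 -> 0 <= C0 -> (0 < minn M1 M2)%N ->
  (count (near_level s M1 M2 A) (zrange M1))%:R
    <= (4 * gap_const + 2) * (minn M1 M2)%:R `^ (1 - a / 2).
Proof.
move=> a12 C0ge0 M0; have /andP[a1 a2] := a12.
set E := _ `^ _.
have E1 : 1 <= E.
  have := @ge0_ler_powR R (1 - a / 2) (ltac:(lra)) 1 (minn M1 M2)%:R.
  by rewrite powR1; apply; rewrite ?nnegrE ?ler1n.
have K1 := gap_const_ge1 a1 C0ge0.
have D0 : 0 <= gap_const * E by apply: mulr_ge0; lra.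
have half (side : pred int) : (forall x y, side x -> side y -> (s <= 2 * x) = (s <= 2 * y)) ->
    (count (predI side (near_level s M1 M2 A)) (zrange M1))%:R <= 2 * (gap_const * E) + 1.
  move=> same; apply: count_int_diam D0 _; first exact: zrange_uniq.
  by move=> x y /andP[sx nx] /andP[sy ny]; exact: near_level_gap a12 M0 nx ny (same x y sx sy).
rewrite -size_filter -(count_predC (fun x => s <= 2 * x)) !count_filter natrD.
have := half (fun x => s <= 2 * x) (fun x y sx sy => etrans sx (esym sy)).
have := half (predC (fun x => s <= 2 * x))
  (fun x y sx sy => etrans (negbTE sx) (esym (negbTE sy))).
rewrite mulrDl mulrA; lra.
Qed.

End LevelSet.

Lemma count_allpairs_graph (T1 : Type) (T2 : eqType) (l1 : seq T1) (l2 : seq T2)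
    (P : pred (T1 * T2)) (g : T1 -> T2) (Q : pred T1) :
  uniq l2 -> (forall x y, P (x, y) -> y = g x /\ Q x) ->
  (count P [seq (x, y) | x <- l1, y <- l2] <= count Q l1)%N.
Proof.
move=> u2 graph; elim: l1 => //= x l1 IH.
rewrite count_cat count_map; apply: leq_add => //.
apply: (@leq_trans (count (fun y => (y == g x) && Q x) l2)).
  by apply: sub_count => y /graph[-> ->]; rewrite eqxx.
case: (Q x); last by rewrite (eq_count (a2 := pred0)) ?count_pred0 // => y; rewrite andbF.
by rewrite (eq_count (a2 := pred1 (g x))) ?count_uniq_mem ?leq_b1 // => y; rewrite andbT.
Qed.

Section Reduction.
Variables (R : realType) (alpha m C0 : R) (N N1 N2 N3 : nat).

Lemma size_S_kk2_le k k2 :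
  (size (S_kk2 alpha m C0 N N1 N2 N3 k k2)
    <= count (near_level alpha C0 (k + k2) N1 N3 (apow alpha k2 + apow alpha k + m))
         (zrange N1))%N.
Proof.
rewrite size_filter; apply: (@count_allpairs_graph _ _ _ _ _ (fun x => k + k2 - x)).
  exact: zrange_uniq.
move=> x y /and5P[/eqP kE _ _ level /and4P[_ x1 _ y3]].
have yE : y = k + k2 - x by rewrite kE; ring.
split=> //; apply/and3P; split; rewrite -?yE //.
by move: level; congr (`|_| <= _); ring.
Qed.

Lemma size_S_k1k3_le k1 k3 :
  (size (S_k1k3 alpha m C0 N N1 N2 N3 k1 k3)
    <= count (near_level alpha C0 (k1 + k3) N N2 (apow alpha k1 + apow alpha k3 - m))
         (zrange N))%N.
Proof.
rewrite size_filter; apply: (@count_allpairs_graph _ _ _ _ _ (fun x => k1 + k3 - x)).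
  exact: zrange_uniq.
move=> x y /= /and5P[/eqP kE _ _ level /and4P[x0 _ y2 _]].
have yE : y = k1 + k3 - x by rewrite kE; ring.
split=> //; apply/and3P; split; rewrite -?yE //.
by rewrite -normrN; move: level; congr (`|_| <= _); ring.
Qed.

End Reduction.

Theorem corollary2p8 (R : realType) :
  exists c0 : R, 0 < c0 < 1 /\
  forall alpha c C0 : R, 1 < alpha < 2 -> 0 < c < c0 -> 0 < C0 ->
  exists C : R, 0 < C /\
  forall (N N1 N2 N3 : nat) (m : R),
    dyadic N -> dyadic N1 -> dyadic N2 -> dyadic N3 ->
    (1 <= N1 <= N)%N -> (1 <= N2 <= N)%N -> (1 <= N3 <= N)%N ->
    (forall k k2 : int,
        (size (S_kk2_bad alpha m C0 c N N1 N2 N3 k k2))%:R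
          <= C * powR (minn N1 N3)%:R (1 - alpha / 2)
     /\ (size (S_kk2 alpha m C0 N N1 N2 N3 k k2))%:R
          <= C * powR (minn N1 N3)%:R (1 - alpha / 2))
    /\
    (forall k1 k3 : int,
        (size (S_k1k3_bad alpha m C0 c N N1 N2 N3 k1 k3))%:R
          <= C * powR (minn N N2)%:R (1 - alpha / 2)
     /\ (size (S_k1k3 alpha m C0 N N1 N2 N3 k1 k3))%:R
          <= C * powR (minn N N2)%:R (1 - alpha / 2)).
Proof.
(* Any c0 works: the bad sets are subsets of the full ones, bounded directly. *)
exists (1 / 2); split; first lra.
move=> alpha c C0 a12 _ C0pos; have /andP[a1 a2] := a12.
have K1 := gap_const_ge1 a1 (ltW C0pos).
exists (4 * gap_const alpha C0 + 2); split; first lra.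
move=> N N1 N2 N3 m _ _ _ _ /andP[N1pos N1N] /andP[N2pos N2N] /andP[N3pos N3N].
have level s M1 M2 A := @count_near_level R alpha C0 s M1 M2 A a12 (ltW C0pos).
split=> [k k2 | k1 k3].
- have full : (size (S_kk2 alpha m C0 N N1 N2 N3 k k2))%:R
      <= (4 * gap_const alpha C0 + 2) * (minn N1 N3)%:R `^ (1 - alpha / 2).
    apply: le_trans (level (k + k2) N1 N3 _ _); last by rewrite leq_min N1pos.
    by rewrite ler_nat; apply: size_S_kk2_le.
  by split=> //; apply: le_trans full; rewrite ler_nat size_filter count_size.
- have full : (size (S_k1k3 alpha m C0 N N1 N2 N3 k1 k3))%:R
      <= (4 * gap_const alpha C0 + 2) * (minn N N2)%:R `^ (1 - alpha / 2).
    apply: le_trans (level (k1 + k3) N N2 _ _); last by rewrite leq_min N2pos (leq_trans N1pos).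
    by rewrite ler_nat; apply: size_S_k1k3_le.
  by split=> //; apply: le_trans full; rewrite ler_nat size_filter count_size.
Qed.
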